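(* Let $T=(V,E,\gamma,\mathrm{p})$ be a fault tree, run Algorithm $\mathtt{SFPA}$ on $T$, and for $v\in V$ let $g_{v,\infty}$ denote the final value of $g_v$ (i.e. $\mathrm{p}(v)$ if $v$ is a basic event, and otherwise the value of $g_v$ after the substitution loop at $v$ has finished). Let $\mathcal I_v=\{w\in V\mid w\prec v\prec\mathrm{id}(w)\}$. Then $g_{v,\infty}=\langle U(T_v[\mathcal I_v])\rangle$.
   Context: A fault tree (FT) is a tuple $T=(V,E,\gamma,\mathrm{p})$ where $(V,E)$ is a rooted directed acyclic graph (edges point from a node to its children; root $R_T$), $\gamma\colon V\to\{\mathtt{OR},\mathtt{AND},\mathtt{BE}\}$ with $\gamma(v)=\mathtt{BE}$ iff $v$ is a leaf, and $\mathrm{p}\colon\mathrm{BE}(T)\to[0,1]$. A partially controllable fault tree (PCFT) is defined the same way except that $\gamma$ may also take the value $\mathtt{CBE}$ (leaves have label $\mathtt{BE}$ or $\mathtt{CBE}$), and $\mathrm{p}$ is defined on $\mathrm{BE}(T)=\{v\mid\gamma(v)=\mathtt{BE}\}$; let $\mathrm{CBE}(T)=\{v\mid\gamma(v)=\mathtt{CBE}\}$. The structure function $S_T(v,\vec f,\vec c)$ ($\vec f\in\{0,1\}^{\mathrm{BE}(T)}$, $\vec c\in\{0,1\}^{\mathrm{CBE}(T)}$) is $f_v$ on $\mathtt{BE}$, $c_v$ on $\mathtt{CBE}$, disjunction over children on $\mathtt{OR}$, conjunction over children on $\mathtt{AND}$. With $\vec F$ having independent coordinates, $\mathbb P(F_v=1)=\mathrm{p}(v)$,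 the unreliability is $U(T)\colon\{0,1\}^{\mathrm{CBE}(T)}\to[0,1]$, $U(T)(\vec c)=\mathbb P(S_T(R_T,\vec F,\vec c)=1)$. Constructions: $T_v$ is the FT consisting of all descendants of $v$ (including $v$) with root $v$ and inherited structure. For $I\subseteq V$, $T[I]$ is the PCFT obtained by setting $\gamma(w)=\mathtt{CBE}$ and removing all outgoing edges for each $w\in I$, and then keeping only the nodes reachable from the root. Order and dominators: $x\preceq y$ iff there is a directed path (possibly of length $0$) from $y$ to $x$; $x\prec y$ iff $x\preceq y$, $x\neq y$. $w$ dominates $v$ if $v\prec w$ and every path from $R_T$ to $v$ contains $w$. For $v\neq R_T$, $\mathrm{id}(v)$ is the unique dominator of $v$ with $\mathrm{id}(v)\preceq w'$ for all dominators $w'$ of $v$. Squarefree polynomial algebra: $\mathcal A(X)$ for finite $X$ consists of formal sums $\sum_{Y\subseteq X}\alpha_Y\prod_{x\in Y}\mathsf F_x$ with polynomial arithmetic subject to $\mathsf F_x^2=\mathsf F_x$; $\mathcal A(X)\subseteq\mathcal A(X')$ for $X\subseteq X'$. For $x\in X\setminus Y$, $\alpha\in\mathcal A(X)$, $\beta\in\mathcal A(Y)$, the substitution $\alpha[\mathsf F_x\mapsto\beta]=\beta\cdot\sum_{Z\ni x}\alpha_Z\prod_{x'\in Z\setminus\{x\}}\mathsf F_{x'}+\sum_{Z\not\ni x}\alpha_Z\prod_{x'\in Z}\mathsf F_{x'}$. For $g\colon\{0,1\}^X\to\mathbb R$, $\langle g\rangle$ is the unique element of $\mathcal A(X)$ with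 $g(\vec c)=\langle g\rangle[\forall x\colon\mathsf F_x\mapsto c_x]$ for all $\vec c$. Algorithm $\mathtt{SFPA}(T)$: set $\mathsf{ToDo}\leftarrow V$. While $\mathsf{ToDo}\neq\varnothing$: pick $v\in\mathsf{ToDo}$ minimal w.r.t. $\preceq$ and remove it. If $\gamma(v)=\mathtt{BE}$, set $g_v\leftarrow\mathrm{p}(v)$. Otherwise set $g_v\leftarrow 1-\prod_{w\in\mathrm{ch}(v)}(1-\mathsf F_w)$ if $\gamma(v)=\mathtt{OR}$, and $g_v\leftarrow\prod_{w\in\mathrm{ch}(v)}\mathsf F_w$ if $\gamma(v)=\mathtt{AND}$ ($\mathrm{ch}(v)$ = children of $v$); then set $\mathsf{ToDo}_v\leftarrow\{w\in V\mid\mathrm{id}(w)=v\}$ and, while $\mathsf{ToDo}_v\neq\varnothing$, pick $w\in\mathsf{ToDo}_v$ maximal w.r.t. $\preceq$, remove it, and set $g_v\leftarrow g_v[\mathsf F_w\mapsto g_w]$. Return $g_{R_T}$. *)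

From HB Require Import structures.
From mathcomp Require Import all_boot all_order all_algebra.
From mathcomp Require Import reals.
Set Implicit Arguments.
Unset Strict Implicit.
Unset Printing Implicit Defensive.
Import Order.TTheory GRing.Theory Num.Theory.
Local Open Scope ring_scope.

Inductive gate := OR | AND | BE.
Definition gate_eqb (a b : gate) : bool :=
  match a, b with OR, OR | AND, AND | BE, BE => true | _, _ => false end.
Lemma gate_eqP : Equality.axiom gate_eqb.
Proof. by case; case; constructor. Qed.
HB.instance Definition _ := hasDecEq.Build gate gate_eqP.

Section FT.
Variables (R : realType) (V : finType) (E : rel V) (r : V)
          (gamma : V -> gate) (p : V -> R).

(* E x y : y is a child of x.  x ⪯ y iff a directed path from y to x. *)
Definition preceq (x y : V) : bool := connect E y x.
Definition prec (x y : V) : bool := (x != y) && connect E y x.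

Definition is_FT : Prop :=
  (forall x y, E x y -> ~~ connect E y x)
  /\ (forall u, connect E r u)
  /\ (forall u, (gamma u == BE) = [forall w, ~~ E u w])
  /\ (forall u, gamma u = BE -> 0 <= p u <= 1).

Definition dominates (w u : V) : Prop :=
  prec u w /\ forall q : seq V, path E r q -> last r q = u -> w \in r :: q.

Definition is_idom (u d : V) : Prop :=
  u != r /\ dominates d u /\ forall d', dominates d' u -> preceq d d'.

Definition calI (v w : V) : Prop :=
  exists d, is_idom w d /\ prec w v /\ prec v d.

(* alpha Y = coefficient of the monomial prod_{x in Y} F_x *)
Definition sfpoly := {ffun {set V} -> R}.
Definition mono (Y : {set V}) : sfpoly := [ffun Z => (Z == Y)%:R].
Definition constA (a : R) : sfpoly := [ffun Z => if Z == set0 then a else 0].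
Definition oneA : sfpoly := constA 1.
Definition addA (a b : sfpoly) : sfpoly := [ffun Z => a Z + b Z].
Definition subA (a b : sfpoly) : sfpoly := [ffun Z => a Z - b Z].
(* polynomial multiplication subject to F_x^2 = F_x *)
Definition mulA (a b : sfpoly) : sfpoly :=
  [ffun Z => \sum_(Y1 : {set V}) \sum_(Y2 : {set V} | Y1 :|: Y2 == Z) a Y1 * b Y2].
Definition inA (X : {set V}) (a : sfpoly) : Prop :=
  forall Y, a Y != 0 -> Y \subset X.
(* alpha[forall x : F_x |-> c_x], with c the indicator of C *)
Definition evalA (a : sfpoly) (C : {set V}) : R :=
  \sum_(Y : {set V}) a Y * (Y \subset C)%:R.
(* alpha[F_x |-> beta] *)
Definition substA (a : sfpoly) (x : V) (b : sfpoly) : sfpoly :=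
  addA (mulA b [ffun W => \sum_(Z : {set V} | x \in Z) a Z * mono (Z :\ x) W])
       [ffun W => \sum_(Z : {set V} | x \notin Z) a Z * mono Z W].

Definition init_poly (v : V) : sfpoly :=
  match gamma v with
  | OR => subA oneA (\big[mulA/oneA]_(w | E v w) subA oneA (mono [set w]))
  | AND => \big[mulA/oneA]_(w | E v w) mono [set w]
  | BE => constA (p v)
  end.

(* s v = the order in which the inner loop at v picks elements of ToDo_v *)
Definition SFPA_step (s : V -> seq V) (g : V -> sfpoly) (v : V) : V -> sfpoly :=
  let nv := if gamma v == BE then constA (p v)
            else foldl (fun acc w => substA acc w (g w)) (init_poly v) (s v) in
  fun u => if u == v then nv else g u.

(* ord = the order in which the outer loop picks vertices;
   the result maps each v to g_{v,infty} *)
Definition SFPA_run (ord : seq V) (s : V -> seq V) : V -> sfpoly :=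
  foldl (SFPA_step s) (fun _ => 0) ord.

(* ord is a legal outer-loop order: every vertex exactly once, each picked
   vertex minimal w.r.t. ⪯ among those still in ToDo *)
Definition valid_outer (ord : seq V) : Prop :=
  uniq ord /\ (forall u, u \in ord) /\
  forall a b v, ord = a ++ v :: b -> forall u, u \in b -> ~~ prec u v.

(* sv is a legal inner-loop order at v: ToDo_v = {w | id(w) = v}, each
   picked w maximal w.r.t. ⪯ among those still in ToDo_v *)
Definition valid_inner (v : V) (sv : seq V) : Prop :=
  uniq sv /\ (forall w, w \in sv <-> is_idom w v) /\
  forall a b w, sv = a ++ w :: b -> forall u, u \in b -> ~~ prec w u.

(* nodes of T_v[I]: reachable from v without leaving a node of I *)
Definition reachI (I : {set V}) (v u : V) : bool :=
  connect (fun a b => (a \notin I) && E a b) v u.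
Definition BEset (I : {set V}) (v : V) : {set V} :=
  [set u | reachI I v u && (u \notin I) && (gamma u == BE)].
Definition CBEset (I : {set V}) (v : V) : {set V} :=
  [set u | reachI I v u && (u \in I)].

(* structure function of T[I] (f = failed BEs, C = controlled CBEs set to 1),
   unfolded to depth n; depth #|V| exceeds the length of every path *)
Fixpoint Sfun (I C f : {set V}) (n : nat) (u : V) : bool :=
  match n with
  | 0 => false
  | n'.+1 =>
    if u \in I then u \in C else
    match gamma u with
    | BE => u \in f
    | OR => [exists w, E u w && Sfun I C f n' w]
    | AND => [forall w, E u w ==> Sfun I C f n' w]
    end
  end.
Definition S_T (I C f : {set V}) (u : V) : bool := Sfun I C f #|V| u.

(* U(T_v[I])(c) = P(S(v, F, c) = 1), F independent Bernoulli(p b) on BE(T_v[I]) *)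
Definition unrel (I : {set V}) (v : V) (C : {set V}) : R :=
  \sum_(f : {set V} | f \subset BEset I v)
     (\prod_(b in f) p b) * (\prod_(b in BEset I v :\: f) (1 - p b))
     * (S_T I C f v)%:R.

End FT.

(* At a gate v the inner loop keeps the
   invariant that g_v is the polynomial of U(T_v[J]), where J is I_v together
   with the nodes still in ToDo_v.  Initially every child of v lies in J, so
   T_v[J] is a single gate over CBEs.  Substituting F_w := g_w is the pivotal
   decomposition of T_v[J \ w] on w: since id(w) = v, the subtree T_w[I_w]
   shares no BE with T_v[J] (every BE of it is dominated by w), and because w
   is maximal among the remaining nodes, the CBEs of T_w[I_w] are exactly the
   nodes of J \ w below w. *)

From HB Require Import structures.
From mathcomp Require Import all_boot all_order all_algebra.
From mathcomp Require Import reals boolp ring.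
Set Implicit Arguments.
Unset Strict Implicit.
Unset Printing Implicit Defensive.
Import GRing.Theory Num.Theory.
Local Open Scope ring_scope.

Section SquarefreePolynomials.
Variables (R : realType) (V : finType).
Implicit Types (a b : sfpoly R V) (C X Y Z W : {set V}).

Lemma evalA_mono Y C : evalA (mono R Y) C = (Y \subset C)%:R.
Proof.
rewrite /evalA (bigD1 Y) //= big1 ?addr0; first by rewrite ffunE eqxx mul1r.
by move=> Z /negbTE neqZY; rewrite ffunE neqZY mul0r.
Qed.

Lemma evalA_sum_mono (P : pred {set V}) (c : {set V} -> R) (g : {set V} -> {set V}) C :
  evalA [ffun W => \sum_(Z | P Z) c Z * mono R (g Z) W] C
  = \sum_(Z | P Z) c Z * (g Z \subset C)%:R.
Proof.
rewrite /evalA; under eq_bigr do rewrite ffunE mulr_suml.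
rewrite exchange_big /=; apply: eq_bigr => Z _.
rewrite -(evalA_mono (g Z) C) /evalA mulr_sumr; apply: eq_bigr => W _.
by rewrite mulrA.
Qed.

Lemma evalA_mul a b C : evalA (mulA a b) C = evalA a C * evalA b C.
Proof.
rewrite /evalA /mulA.
transitivity (\sum_(Y1 : {set V}) \sum_(Y2 : {set V})
                 a Y1 * b Y2 * ((Y1 :|: Y2) \subset C)%:R).
  under eq_bigr do rewrite ffunE mulr_suml.
  rewrite exchange_big /=; apply: eq_bigr => Y1 _.
  under eq_bigr do rewrite mulr_suml.
  rewrite (exchange_big_dep xpredT) //=; apply: eq_bigr => Y2 _.
  by rewrite (big_pred1 (Y1 :|: Y2)) // => Z /=; rewrite eq_sym.
rewrite mulr_suml; apply: eq_bigr => Y1 _; rewrite mulr_sumr; apply: eq_bigr => Y2 _.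
by rewrite subUset; case: (Y1 \subset C); case: (Y2 \subset C);
  rewrite /= ?mulr1 ?mulr0 ?mul0r.
Qed.

Lemma evalA_add a b C : evalA (addA a b) C = evalA a C + evalA b C.
Proof. by rewrite /evalA -big_split; apply: eq_bigr => Y _; rewrite ffunE mulrDl. Qed.

Lemma evalA_sub a b C : evalA (subA a b) C = evalA a C - evalA b C.
Proof. by rewrite /evalA -sumrB; apply: eq_bigr => Y _; rewrite ffunE mulrBl. Qed.

Lemma evalA_const (c : R) C : evalA (constA V c) C = c.
Proof.
rewrite /evalA (bigD1 set0) //= big1 ?addr0; first by rewrite ffunE eqxx sub0set mulr1.
by move=> Z /negbTE nZ0; rewrite ffunE nZ0 mul0r.
Qed.

Lemma evalA_one C : evalA (oneA R V) C = 1.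
Proof. exact: evalA_const. Qed.

Lemma evalA_prod (I : finType) (P : pred I) (F : I -> sfpoly R V) C :
  evalA (\big[@mulA R V/oneA R V]_(i | P i) F i) C = \prod_(i | P i) evalA (F i) C.
Proof.
by rewrite (big_morph (fun a => evalA a C) (fun a b => evalA_mul a b C) (evalA_one C)).
Qed.

Lemma evalA_substA a x b C :
  evalA (substA a x b) C =
  evalA b C * (evalA a (x |: C) - evalA a (C :\ x)) + evalA a (C :\ x).
Proof.
rewrite /substA evalA_add evalA_mul !evalA_sum_mono.
have without_x : \sum_(Z : {set V} | x \notin Z) a Z * (Z \subset C)%:R
                 = evalA a (C :\ x).
  rewrite /evalA [RHS](bigID (fun Z => x \in Z)) /= [X in _ = X + _]big1 ?add0r.
    by apply: eq_bigr => Z xNZ; rewrite subsetD1 xNZ andbT.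
  by move=> Z xZ; rewrite subsetD1 xZ andbF mulr0.
have with_x : evalA a (x |: C) =
   \sum_(Z : {set V} | x \in Z) a Z * (Z :\ x \subset C)%:R + evalA a (C :\ x).
  rewrite -without_x /evalA [LHS](bigID (fun Z => x \in Z)) /=; congr (_ + _).
    by apply: eq_bigr => Z _; rewrite subDset.
  apply: eq_bigr => Z xNZ; rewrite -subDset.
  by rewrite (_ : Z :\: [set x] = Z) //; apply/setDidPl; rewrite disjoint_sym disjoints1.
by rewrite with_x without_x addrK.
Qed.

Lemma inAP X a : inA X a <-> forall Y, ~~ (Y \subset X) -> a Y = 0.
Proof.
split=> aX Y; first by move=> YnX; apply/eqP; exact: contraNT (aX Y) YnX.
by apply: contraR => /aX ->.
Qed.

Lemma inAS X X' a : X \subset X' -> inA X a -> inA X' a.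
Proof. by move=> sXX' aX Y /aX sYX; exact: subset_trans sYX sXX'. Qed.

Lemma inA_const X (c : R) : inA X (constA V c).
Proof.
by move=> Y; rewrite ffunE; case: (eqVneq Y set0) => [->|]; rewrite ?sub0set ?eqxx.
Qed.

Lemma inA_mono Y : inA Y (mono R Y).
Proof. by move=> Z; rewrite ffunE; case: (eqVneq Z Y) => [->|]; rewrite ?subxx ?eqxx. Qed.

Lemma inA_mul X Y a b : inA X a -> inA Y b -> inA (X :|: Y) (mulA a b).
Proof.
rewrite !inAP => aX bY Z ZnXY; rewrite ffunE big1 // => Y1 _.
rewrite big1 // => Y2 /eqP defZ.
have : ~~ (Y1 \subset X) || ~~ (Y2 \subset Y).
  by move: ZnXY; rewrite -defZ; apply: contraR; rewrite negb_or !negbK => /andP[];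
    exact: setUSS.
by case/orP => [/aX -> | /bY ->]; rewrite ?mul0r ?mulr0.
Qed.

Lemma inA_add X a b : inA X a -> inA X b -> inA X (addA a b).
Proof. by rewrite !inAP => aX bX Y YnX; rewrite ffunE aX ?bX ?addr0. Qed.

Lemma inA_sub X a b : inA X a -> inA X b -> inA X (subA a b).
Proof. by rewrite !inAP => aX bX Y YnX; rewrite ffunE aX ?bX ?subr0. Qed.

Lemma inA_prod (I : finType) (P : pred I) (F : I -> sfpoly R V) X :
  (forall i, P i -> inA X (F i)) -> inA X (\big[@mulA R V/oneA R V]_(i | P i) F i).
Proof.
move=> FX; apply: (big_ind (inA X)) => //; first exact: inA_const.
by move=> a b aX bX; rewrite -(setUid X); exact: inA_mul.
Qed.

Lemma inA_sum_mono X (P : pred {set V}) (c : {set V} -> R) (g : {set V} -> {set V}) :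
  (forall Z, P Z -> c Z != 0 -> g Z \subset X) ->
  inA X [ffun W => \sum_(Z | P Z) c Z * mono R (g Z) W].
Proof.
move=> gX; rewrite inAP => W WnX; rewrite ffunE big1 // => Z PZ; rewrite ffunE.
case: eqP => [defW|_]; last by rewrite mulr0.
have [->|/(gX Z PZ) gZX] := eqVneq (c Z) 0; first by rewrite mul0r.
by move: WnX; rewrite defW gZX.
Qed.

Lemma inA_substA X Y a x b :
  inA X a -> inA Y b -> inA ((X :\ x) :|: Y) (substA a x b).
Proof.
move=> aX bY; apply: inA_add.
  rewrite setUC; apply: inA_mul => //; apply: inA_sum_mono => Z _ /aX.
  exact: setSD.
apply: inAS (subsetUl _ _) _; apply: inA_sum_mono => Z xNZ /aX ZX.
by rewrite subsetD1 ZX.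
Qed.

Lemma inA_substA_notin X a x b : inA X a -> x \notin X -> inA (X :\ x) (substA a x b).
Proof.
move=> aX xNX; have a0 Z : x \in Z -> a Z = 0.
  by move=> xZ; apply: (iffLR (inAP X a) aX); apply: contra xNX => /subsetP; apply.
rewrite /substA inAP => W WnX; rewrite ffunE [X in X + _]ffunE big1 ?add0r.
  rewrite ffunE big1 // => Z xNZ; rewrite ffunE; case: eqP => [defW|_]; last first.
    by rewrite mulr0.
  move/inAP: aX => ->; first by rewrite mul0r.
  by apply: contra WnX; rewrite defW subsetD1 xNZ andbT.
move=> Y1 _; rewrite big1 // => Y2 _; rewrite ffunE big1 ?mulr0 // => Z xZ.
by rewrite a0 ?mul0r.
Qed.

End SquarefreePolynomials.

Section ProductBernoulli.
Variables (R : realType) (V : finType) (p : V -> R).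
Implicit Types (B : {set V}) (h : {set V} -> R).

(* Expectation of h(F), where F is the random set of failed elements of B,
   each b in B failing independently with probability p b. *)
Definition expect B h : R :=
  \sum_(f : {set V} | f \subset B)
     (\prod_(b in f) p b) * (\prod_(b in B :\: f) (1 - p b)) * h f.

Definition depends_on B h := forall f, h f = h (f :&: B).

Lemma eq_expect B h1 h2 : h1 =1 h2 -> expect B h1 = expect B h2.
Proof. by move=> eq_h; apply: eq_bigr => f _; rewrite eq_h. Qed.

Lemma expectD B h1 h2 : expect B (fun f => h1 f + h2 f) = expect B h1 + expect B h2.
Proof. by rewrite /expect -big_split; apply: eq_bigr => f _; rewrite mulrDr. Qed.

Lemma expectB B h1 h2 : expect B (fun f => h1 f - h2 f) = expect B h1 - expect B h2.
Proof. by rewrite /expect -sumrB; apply: eq_bigr => f _; rewrite mulrBr. Qed.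

Lemma expect_set0 h : expect set0 h = h set0.
Proof.
rewrite /expect (big_pred1 set0) => [|f]; last by rewrite /= subset0.
by rewrite setD0 !big_set0 !mul1r.
Qed.

Lemma expect_set1 b h : expect [set b] h = p b * h [set b] + (1 - p b) * h set0.
Proof.
have n0b : set0 != [set b] by apply/eqP => /setP /(_ b); rewrite !inE eqxx.
rewrite /expect (bigD1 [set b]) ?subxx //= (bigD1 set0) /= ?sub0set //.
rewrite [X in _ + (_ + X)]big1 ?addr0; last first.
  by move=> f /andP[/andP[]]; rewrite subset1 => /orP[]/eqP ->; rewrite eqxx ?andbF.
by rewrite big_set1 setDv setD0 !big_set0 big_set1 !mulr1 mul1r.
Qed.

Lemma setUI_disjoint B1 B2 (f1 f2 : {set V}) :
  [disjoint B1 & B2] -> f1 \subset B1 -> f2 \subset B2 ->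
  (f1 :|: f2) :&: B1 = f1 /\ (f1 :|: f2) :&: B2 = f2.
Proof.
move=> dis12 sf1 sf2.
have f2B1 : f2 :&: B1 = set0 by apply/eqP; rewrite setI_eq0 (disjointWl sf2) // disjoint_sym.
have f1B2 : f1 :&: B2 = set0 by apply/eqP; rewrite setI_eq0 (disjointWl sf1).
by rewrite !setIUl (setIidPl sf1) (setIidPl sf2) f2B1 f1B2 setU0 set0U.
Qed.

Lemma sum_subsetU (F : {set V} -> R) B1 B2 : [disjoint B1 & B2] ->
  \sum_(f : {set V} | f \subset B1 :|: B2) F f =
  \sum_(f1 : {set V} | f1 \subset B1) \sum_(f2 : {set V} | f2 \subset B2) F (f1 :|: f2).
Proof.
move=> dis12; rewrite pair_big /=.
rewrite (reindex_onto (fun f => (f :&: B1, f :&: B2)) (fun f12 => f12.1 :|: f12.2)) /=.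
  apply: eq_big => [f | f sf]; last by rewrite -setIUr (setIidPl sf).
  rewrite !subsetIr -setIUr /=; apply/idP/idP => [sf | /eqP <-]; last by rewrite subsetIr.
  by rewrite (setIidPl sf).
move=> [f1 f2] /andP[/= sf1 sf2].
by have [-> ->] := setUI_disjoint dis12 sf1 sf2.
Qed.

Lemma prod_setU (F : V -> R) (A B : {set V}) : [disjoint A & B] ->
  \prod_(i in A :|: B) F i = \prod_(i in A) F i * \prod_(i in B) F i.
Proof. by move=> dis_AB; rewrite -bigU //; apply: eq_bigl => i; rewrite inE. Qed.

Lemma expectM_disjoint B1 B2 h1 h2 : [disjoint B1 & B2] ->
  depends_on B1 h1 -> depends_on B2 h2 ->
  expect (B1 :|: B2) (fun f => h1 f * h2 f) = expect B1 h1 * expect B2 h2.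
Proof.
move=> dis12 h1B1 h2B2; rewrite /expect sum_subsetU // mulr_suml.
apply: eq_bigr => f1 sf1; rewrite mulr_sumr; apply: eq_bigr => f2 sf2.
have [f12B1 f12B2] := setUI_disjoint dis12 sf1 sf2.
have NfU : (B1 :|: B2) :\: (f1 :|: f2) = (B1 :\: f1) :|: (B2 :\: f2).
  have dis_B1f2 : [disjoint B1 :\: f1 & f2].
    exact: disjointWl (subsetDl _ _) (disjointWr sf2 dis12).
  have dis_B2f1 : [disjoint B2 & f1] by rewrite disjoint_sym (disjointWl sf1 dis12).
  by rewrite setDUl -!setDDl (setDidPl dis_B1f2) (setDidPl dis_B2f1).
rewrite /= [h1 _]h1B1 [h2 _]h2B2 f12B1 f12B2 NfU !prod_setU; first by ring.
  exact: disjointWl (subsetDl _ _) (disjointWr (subsetDl _ _) dis12).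
exact: disjointWl sf1 (disjointWr sf2 dis12).
Qed.

Lemma expect1 B : expect B (fun _ => 1) = 1.
Proof.
have [n] := ubnP #|B|; elim: n B => // n IHn B.
have [->|[b bB]] := set_0Vmem B; first by rewrite expect_set0.
rewrite (cardsD1 b B) bB add1n ltnS => /IHn IHB; rewrite -(setD1K bB).
rewrite -(@eq_expect _ (fun _ => 1 * 1)) => [|f]; last by rewrite mulr1.
rewrite (expectM_disjoint (h1 := fun _ => 1) (h2 := fun _ => 1)) //.
  by rewrite IHB expect_set1 !mulr1 addrC subrK.
by rewrite disjoints1 setD11.
Qed.

Lemma expect_cst B c : expect B (fun _ => c) = c.
Proof.
rewrite -[RHS]mul1r -(expect1 B) /expect mulr_suml.
by apply: eq_bigr => f _; rewrite mulr1.
Qed.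

Lemma depends_onS B B' h : B \subset B' -> depends_on B h -> depends_on B' h.
Proof. by move=> sBB' hB f; rewrite hB [RHS]hB -setIA (setIidPr sBB'). Qed.

Lemma expect_superset B B' h : B \subset B' -> depends_on B h -> expect B' h = expect B h.
Proof.
move=> sBB' hB; have -> : B' = B :|: B' :\: B.
  by rewrite setDE setUIr setUCr setIT (setUidPr sBB').
rewrite -(@eq_expect _ (fun f => h f * 1)) => [|f]; last by rewrite mulr1.
rewrite (expectM_disjoint (h2 := fun _ => 1)) ?expect1 ?mulr1 //.
by rewrite -setI_eq0 setIDA setDIl setDv set0I.
Qed.

End ProductBernoulli.

Section Paths.
Variables (T : finType) (e : rel T).

Lemma path_mem_connect x q y : path e x q -> y \in x :: q ->
  connect e x y /\ connect e y (last x q).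
Proof.
elim: q x y => [|z q IHq] x y /=; first by move=> _; rewrite inE => /eqP ->.
move=> /andP[exz ezq]; rewrite inE => /predU1P[->|yq].
  split; first exact: connect0.
  exact: connect_trans (connect1 exz) (IHq z z ezq (mem_head z q)).2.
by have [zy ylast] := IHq z y ezq yq; split=> //; exact: connect_trans (connect1 exz) zy.
Qed.

Lemma path_mem_comparable x q a b : path e x q -> a \in x :: q -> b \in x :: q ->
  connect e a b || connect e b a.
Proof.
elim: q x => [|z q IHq] x.
  by move=> _; rewrite !inE => /eqP -> /eqP ->; rewrite connect0.
move=> exq; have /andP[_ ezq] := exq.
have in_xzq y : y \in z :: q -> y \in x :: z :: q by move=> yq; rewrite in_cons yq orbT.
rewrite in_cons => /predU1P[->|aq]; rewrite in_cons => /predU1P[->|bq].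
- by rewrite connect0.
- by rewrite (path_mem_connect exq (in_xzq b bq)).1.
- by rewrite (path_mem_connect exq (in_xzq a aq)).1 orbT.
- exact: IHq ezq aq bq.
Qed.

Lemma connect_restrict (e' : rel T) a :
  (forall x y, connect e a x -> e x y -> e' x y) ->
  forall u, connect e a u -> connect e' a u.
Proof.
move=> ee' u /connectP[q]; elim/last_ind: q u => [|q y IHq] u /=; first by move=> _ ->.
rewrite rcons_path last_rcons => /andP[eq ey] ->.
apply: connect_trans (IHq _ eq erefl) (connect1 (ee' _ _ _ ey)).
by apply/connectP; exists q.
Qed.

Lemma path_restrict_notin (K : {set T}) x q y :
  path (fun a b => (a \notin K) && e a b) x q -> y \in x :: q -> y != last x q ->
  y \notin K.
Proof.
elim: q x => [|z q IHq] x /=; first by rewrite inE => _ /eqP ->; rewrite eqxx.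
move=> /andP[/andP[xNK _] zq]; rewrite inE => /predU1P[-> //|yq].
exact: IHq zq yq.
Qed.

End Paths.

Section RootedDag.
Variables (V : finType) (E : rel V) (r : V).
Hypothesis acyclicE : forall x y, E x y -> ~~ connect E y x.
Hypothesis rootedE : forall u, connect E r u.

Lemma connect_anti x y : connect E x y -> connect E y x -> x = y.
Proof.
move=> /connectP[[|z q] //= /andP[Exz zq] ->] yx.
have zy := (path_mem_connect zq (mem_head z q)).2.
by move: (acyclicE Exz); rewrite (connect_trans zy yx).
Qed.

Lemma precxx x : prec E x x = false.
Proof. by rewrite /prec eqxx. Qed.

Lemma edge_prec x y : E x y -> prec E y x.
Proof.
move=> Exy; rewrite /prec connect1 // andbT.
by apply: contraNneq (acyclicE Exy) => ->.
Qed.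

Lemma prec_trans x y z : prec E x y -> prec E y z -> prec E x z.
Proof.
move=> /andP[nxy yx] /andP[_ zy]; rewrite /prec (connect_trans zy yx) andbT.
by apply: contraNneq nxy => exz; rewrite exz in yx *; rewrite (connect_anti zy yx).
Qed.

Lemma connect_root u : connect E u r -> u = r.
Proof. by move=> ur; apply: connect_anti ur (rootedE u). Qed.

Definition ndesc u := #|[set x | prec E x u]|.

Lemma ndesc_lt x u : prec E x u -> (ndesc x < ndesc u)%N.
Proof.
move=> xu; apply: proper_card; rewrite properE; apply/andP; split.
  by apply/subsetP => y; rewrite !inE => /prec_trans; apply.
by apply/subsetPn; exists x; rewrite !inE ?xu ?precxx.
Qed.

Lemma ndesc_max u : (ndesc u < #|V|)%N.
Proof.
rewrite -cardsT; apply: proper_card; rewrite properE subsetT /=.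
by apply/subsetPn; exists u; rewrite !inE ?precxx.
Qed.

(* The dominators of u all lie on any path from r to u, so they are pairwise
   comparable and the one with fewest descendants is below all the others. *)
Lemma idom_exists u : u != r -> exists d, is_idom E r u d.
Proof.
move=> ur; have r_dom : `[< dominates E r r u >].
  by apply/asboolP; split=> [|q _ _]; rewrite ?mem_head // /prec ur rootedE.
case: (@arg_minnP _ r (fun d => `[< dominates E r d u >]) ndesc r_dom).
move=> d /asboolP d_dom d_min.
exists d; split=> //; split=> // d' d'_dom.
have [q rq uq] := connectP (rootedE u).
have dq := d_dom.2 q rq (esym uq); have d'q := d'_dom.2 q rq (esym uq).
case/orP: (path_mem_comparable rq dq d'q) => // d'd.
have [<-|nd'd] := eqVneq d' d; first exact: connect0.
have /ndesc_lt : prec E d' d by rewrite /prec nd'd.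
by rewrite ltnNge d_min //; apply/asboolP.
Qed.

Lemma idom_uniq u d1 d2 : is_idom E r u d1 -> is_idom E r u d2 -> d1 = d2.
Proof.
move=> [_ [dom1 min1]] [_ [dom2 min2]].
by apply: connect_anti; [exact: min2 dom1 | exact: min1 dom2].
Qed.

Lemma dominates_parent d u y q : dominates E r d u -> E y u ->
  path E r q -> last r q = y -> d \in r :: q.
Proof.
move=> [ud d_dom] Eyu rq qy.
have := d_dom (rcons q u); rewrite rcons_path rq qy Eyu last_rcons -rcons_cons mem_rcons.
by rewrite inE => /(_ erefl erefl) /predU1P[du|//]; rewrite du precxx in ud.
Qed.

Lemma dominates_connect_parent d u y : dominates E r d u -> E y u -> connect E d y.
Proof.
move=> d_dom Eyu; have [q rq yq] := connectP (rootedE y).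
have := path_mem_connect rq (dominates_parent d_dom Eyu rq (esym yq)).
by rewrite -yq => -[].
Qed.

Lemma dominates_trans w d z : dominates E r w d -> dominates E r d z -> dominates E r w z.
Proof.
move=> [dw w_dom] [zd d_dom]; split=> [|q rq qz]; first exact: prec_trans zd dw.
move: (d_dom q rq qz); rewrite inE => /predU1P[dr|dq].
  by move: dw; rewrite dr /prec => /andP[/eqP nrw /connect_root wr]; rewrite wr in nrw.
case/splitPr: dq rq qz => q1 q2; rewrite cat_path /= => /and3P[rq1 Ed _] _.
have := w_dom (rcons q1 d); rewrite rcons_path rq1 Ed last_rcons => /(_ erefl erefl).
by rewrite -rcons_cons mem_rcons inE -cat_cons mem_cat => /predU1P[->|->];
  rewrite ?mem_head ?orbT.
Qed.

Lemma dominates_up d x w : dominates E r d x -> connect E w x -> prec E w d ->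
  dominates E r d w.
Proof.
move=> [_ d_dom] /connectP[q2 wq2 xq2] wd; split=> // q rq qw.
have := d_dom (q ++ q2); rewrite cat_path rq qw wq2 last_cat qw -xq2.
move=> /(_ erefl erefl); rewrite -cat_cons mem_cat => /orP[//|dq2].
have /(path_mem_connect wq2)[wd' _] : d \in w :: q2 by rewrite in_cons dq2 orbT.
by move: wd => /andP[/eqP nwd dw]; case: nwd; exact: connect_anti wd' dw.
Qed.

Lemma child_calI_or_idom u w : E u w -> calI E r u w \/ is_idom E r w u.
Proof.
move=> Euw; have wr : w != r.
  by apply: contraTneq (acyclicE Euw) => ->; rewrite rootedE.
have [d w_idom] := idom_exists wr; have du := dominates_connect_parent w_idom.2.1 Euw.
have [-> | nud] := eqVneq u d; [by right | left].
by exists d; split=> //; split; [exact: edge_prec | rewrite /prec nud].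
Qed.

(* calI quantifies over all paths from the root, hence the classical [`[< _ >]]. *)
Definition Iset u : {set V} := [set x | `[< calI E r u x >]].

Lemma in_Iset u x : x \in Iset u <-> calI E r u x.
Proof. by rewrite inE; split=> /asboolP. Qed.

Lemma notin_Iset u : u \notin Iset u.
Proof. by apply/negP => /in_Iset[d [_ [uu _]]]; rewrite precxx in uu. Qed.

Lemma reachI_connect (K : {set V}) a b : reachI E K a b -> connect E a b.
Proof. by apply: connect_sub => x y /andP[_ Exy]; exact: connect1. Qed.

Lemma reachI_step (K : {set V}) a b : a \notin K -> E a b -> reachI E K a b.
Proof. by move=> aNK Eab; apply: connect1; rewrite /= aNK Eab. Qed.

Lemma reachIS (K K' : {set V}) a b : K' \subset K -> reachI E K a b -> reachI E K' a b.
Proof.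
move=> sK'K; apply: connect_sub => x y /andP[xNK Exy]; apply: reachI_step Exy.
by apply: contra xNK; apply: (subsetP sK'K).
Qed.

(* If id(z) were strictly above w, then z would belong to I_w. *)
Lemma dominated_step w y z : y = w \/ dominates E r w y -> E y z ->
  z \notin Iset w -> z = w \/ dominates E r w z.
Proof.
move=> wy Eyz zNI; have [-> | nzw] := eqVneq z w; [by left | right].
have wy' : connect E w y by case: wy => [-> | [/andP[]]].
have zw : prec E z w by rewrite /prec nzw (connect_trans wy' (connect1 Eyz)).
have zr : z != r.
  apply: contraTneq zw => ->; apply/negP => /andP[/eqP nrw /connect_root wr].
  exact: nrw (esym wr).
have [d z_idom] := idom_exists zr; have [_ [d_dom _]] := z_idom.
have dy := dominates_connect_parent d_dom Eyz.
have [<- // | ndw] := eqVneq d w.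
have : connect E d w || connect E w d.
  case: wy => [<- | w_dom]; first by rewrite dy.
  have [q rq qy] := connectP (rootedE y).
  exact: path_mem_comparable rq (dominates_parent d_dom Eyz rq (esym qy))
                                (w_dom.2 q rq (esym qy)).
case/orP => [dw | wd].
  case/negP: zNI; apply/in_Iset; exists d.
  by split=> //; split=> //; rewrite /prec eq_sym ndw.
case: wy => [yw | w_dom]; first by case/eqP: ndw; apply: connect_anti _ wd; rewrite -yw.
by apply: dominates_trans (dominates_up w_dom dy _) d_dom; rewrite /prec ndw.
Qed.

Lemma reachI_Iset_dominated w b : reachI E (Iset w) w b -> b \notin Iset w ->
  b = w \/ dominates E r w b.
Proof.
move=> /connectP[q wq ->]; move: wq.
suff dominated_last y : y = w \/ dominates E r w y ->
    path (fun a b => (a \notin Iset w) && E a b) y q -> last y q \notin Iset w ->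
    last y q = w \/ dominates E r w (last y q) by apply: dominated_last; left.
elim: q y => [|z q IHq] y wy /=; first by [].
move=> /andP[/andP[_ Eyz] zq] qNI.
have zNI : z \notin Iset w.
  have [zq_last | nzq_last] := eqVneq z (last z q); first by rewrite zq_last.
  exact: path_restrict_notin zq (mem_head z q) nzq_last.
exact: IHq (dominated_step wy Eyz zNI) zq qNI.
Qed.

Lemma dominated_reachI_notin (J : {set V}) u w b : prec E w u -> dominates E r w b ->
  reachI E J u b -> w \notin J.
Proof.
move=> wu [bw w_dom] /connectP[qb ub bq].
have [q0 rq0 uq0] := connectP (rootedE u).
have ub' : path E u qb by apply: sub_path ub => x y /andP[].
have := w_dom (q0 ++ qb); rewrite cat_path rq0 -uq0 ub' last_cat -uq0 -bq.
move=> /(_ erefl erefl); rewrite -cat_cons mem_cat => /orP[wq0 | wqb].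
  have := (path_mem_connect rq0 wq0).2; rewrite -uq0 => wu'.
  by move: wu => /andP[/eqP nwu uw]; case: nwu; apply: connect_anti.
apply: path_restrict_notin ub _ _; first by rewrite in_cons wqb orbT.
by rewrite -bq; case/andP: bw; rewrite eq_sym.
Qed.

(* If id(x) = u then x is still in ToDo_u, because w was picked maximal;
   otherwise id(x) lies strictly above u. *)
Lemma calI_idom_child u w (a l : seq V) x :
  (forall y, y \in a ++ w :: l <-> is_idom E r y u) -> uniq (a ++ w :: l) ->
  (forall y, y \in a -> ~~ prec E y w) -> connect E w x ->
  calI E r w x <-> calI E r u x \/ x \in l.
Proof.
move=> idom_u uniq_s a_prec wx.
have w_idom : is_idom E r w u by apply/idom_u; rewrite mem_cat mem_head orbT.
have wu : prec E w u by case: w_idom => _ [[]].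
have [-> | nxw] := eqVneq x w.
  move: uniq_s; rewrite cat_uniq /= => /and4P[_ _ /negPf -> _].
  split=> [[d [_ [ww _]]] | [[d [w_idom' [_ ud]]] | //]]; first by rewrite precxx in ww.
  by rewrite (idom_uniq w_idom' w_idom) precxx in ud.
have xw : prec E x w by rewrite /prec nxw.
split=> [[d [x_idom [_ wd]]] | [[d [x_idom [_ ud]]] | xl]].
- have du : preceq E u d := w_idom.2.2 d (dominates_up x_idom.2.1 wx wd).
  have [eq_ud | nud] := eqVneq u d; [right | left].
    have /idom_u : is_idom E r x u by rewrite eq_ud.
    rewrite mem_cat in_cons (negPf nxw) /= => /orP[xa | //].
    by move: (a_prec x xa); rewrite xw.
  by exists d; split=> //; split; [exact: prec_trans xw wu | rewrite /prec nud].
- by exists d; split=> //; split=> //; exact: prec_trans wu ud.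
- by exists u; split; [apply/idom_u; rewrite mem_cat in_cons xl !orbT | split].
Qed.

End RootedDag.

Section FaultTree.
Variables (R : realType) (V : finType) (E : rel V) (r : V) (gamma : V -> gate) (p : V -> R).
Hypothesis acyclicE : forall x y, E x y -> ~~ connect E y x.
Hypothesis rootedE : forall u, connect E r u.
Implicit Types (I J K C f : {set V}).

Lemma ndesc_child u w n : E u w -> (ndesc E u < n.+1)%N -> (ndesc E w < n)%N.
Proof. by move=> Euw; apply: leq_trans (ndesc_lt acyclicE (edge_prec acyclicE Euw)). Qed.

Lemma Sfun_fuel I C f n m u : (ndesc E u < n)%N -> (ndesc E u < m)%N ->
  Sfun E gamma I C f n u = Sfun E gamma I C f m u.
Proof.
elim: n m u => [|n IHn] [|m] u //= un um; case: (u \in I) => //.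
by case: (gamma u) => //; [apply: eq_existsb | apply: eq_forallb] => x;
  case Eux: (E u x) => //=; apply: IHn; apply: ndesc_child Eux _.
Qed.

Lemma Sfun_agree J K C f w :
  (forall u, reachI E K w u -> (u \in J) = (u \in K)) ->
  forall n u, reachI E K w u -> Sfun E gamma J C f n u = Sfun E gamma K C f n u.
Proof.
move=> JK; elim=> [|n IHn] u wu //=; rewrite JK //; case: ifP => // uNK.
have wx x : E u x -> reachI E K w x.
  by move=> Eux; apply: connect_trans wu (reachI_step _ Eux); rewrite uNK.
by case: (gamma u) => //; [apply: eq_existsb | apply: eq_forallb] => x;
  case Eux: (E u x) => //=; rewrite IHn ?wx.
Qed.

Lemma Sfun_depends I C f v n u : reachI E I v u ->
  Sfun E gamma I C f n u = Sfun E gamma I C (f :&: BEset E gamma I v) n u.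
Proof.
elim: n u => [|n IHn] u vu //=; case: ifP => // uNI.
have vx x : E u x -> reachI E I v x.
  by move=> Eux; apply: connect_trans vu (reachI_step _ Eux); rewrite uNI.
case gu: (gamma u); last by rewrite !inE vu uNI gu andbT.
  by apply: eq_existsb => x; case Eux: (E u x) => //=; rewrite IHn ?vx.
by apply: eq_forallb => x; case Eux: (E u x) => //=; rewrite IHn ?vx.
Qed.

Lemma Sfun_setD1 J C f w (beta : bool) : w \in J ->
  (forall n, (ndesc E w < n)%N -> Sfun E gamma (J :\ w) C f n w = beta) ->
  forall n u, (ndesc E u < n)%N ->
  Sfun E gamma (J :\ w) C f n u =
  Sfun E gamma J (if beta then w |: C else C :\ w) f n u.
Proof.
move=> wJ w_beta; elim=> [|n IHn] u un //.
have [eq_uw | nuw] := eqVneq u w.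
  by subst u; rewrite w_beta //= wJ; case: (beta); rewrite !inE eqxx.
rewrite /= in_setD1 nuw /=; case: (u \in J).
  by case: (beta); rewrite !inE ?nuw ?(negPf nuw).
by case: (gamma u) => //; [apply: eq_existsb | apply: eq_forallb] => x;
  case Eux: (E u x) => //=; rewrite IHn // (ndesc_child Eux).
Qed.

Lemma in_BEset I v u :
  u \in BEset E gamma I v = [&& reachI E I v u, u \notin I & gamma u == BE].
Proof. by rewrite inE andbA. Qed.

Lemma unrel_expect I u C :
  unrel E gamma p I u C = expect p (BEset E gamma I u) (fun f => (S_T E gamma I C f u)%:R).
Proof. by []. Qed.

Lemma S_T_depends I u C :
  depends_on (BEset E gamma I u) (fun f => (S_T E gamma I C f u)%:R : R).
Proof. by move=> f; rewrite /S_T -Sfun_depends //; exact: connect0. Qed.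

Lemma S_T_setD1 J K v w C f : w \in J ->
  (forall u, reachI E K w u -> (u \in J :\ w) = (u \in K)) ->
  S_T E gamma (J :\ w) C f v =
  S_T E gamma J (if S_T E gamma K C f w then w |: C else C :\ w) f v.
Proof.
move=> wJ JK; apply: Sfun_setD1 (ndesc_max E v) => // n wn.
rewrite (Sfun_fuel _ _ _ wn (ndesc_max E w)).
exact: Sfun_agree JK _ _ (connect0 _ _).
Qed.

(* Pivotal decomposition on w: T_w[K] and T_v[J] share no BE, so the failure
   of w is independent of the rest of T_v[J]. *)
Lemma unrel_pivot J K v w C : w \in J ->
  (forall u, reachI E K w u -> (u \in J :\ w) = (u \in K)) ->
  [disjoint BEset E gamma J v & BEset E gamma K w] ->
  unrel E gamma p (J :\ w) v C =
  unrel E gamma p K w C * unrel E gamma p J v (w |: C) +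
  (1 - unrel E gamma p K w C) * unrel E gamma p J v (C :\ w).
Proof.
move=> wJ JK dis_JK; set B1 := BEset E gamma J v; set B2 := BEset E gamma K w.
set s1 := fun f => (S_T E gamma K C f w)%:R : R.
set a1 := fun f => (S_T E gamma J (w |: C) f v)%:R : R.
set a0 := fun f => (S_T E gamma J (C :\ w) f v)%:R : R.
have s1_dep : depends_on B2 s1 by exact: S_T_depends.
have a1_dep : depends_on B1 a1 by exact: S_T_depends.
have a0_dep : depends_on B1 a0 by exact: S_T_depends.
have Ns1_dep : depends_on B2 (fun f => 1 - s1 f) by move=> f /=; rewrite -s1_dep.
rewrite unrel_expect -(expect_superset _ (subsetUl _ (B1 :|: B2)) (S_T_depends _ _ _)).
rewrite (@eq_expect _ _ p _ _ (fun f => a1 f * s1 f + a0 f * (1 - s1 f))); last first.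
  move=> f; rewrite (@S_T_setD1 J K v w C f wJ JK) /s1 /a1 /a0.
  by case: (S_T E gamma K C f w); rewrite /= ?subrr ?subr0 ?mulr1 ?mulr0 ?addr0 ?add0r.
rewrite (expect_superset _ (subsetUr _ (B1 :|: B2))); last first.
  move=> f; rewrite (depends_onS (subsetUl B1 B2) a1_dep f).
  rewrite (depends_onS (subsetUl B1 B2) a0_dep f).
  by rewrite (depends_onS (subsetUr B1 B2) s1_dep f).
rewrite expectD !expectM_disjoint // expectB expect1 !unrel_expect.
by rewrite mulrC [X in _ + X]mulrC.
Qed.

Lemma unrel_BE I v C : gamma v = BE -> v \notin I -> (forall w, ~~ E v w) ->
  unrel E gamma p I v C = p v.
Proof.
move=> vBE vNI v_leaf; rewrite unrel_expect; have -> : BEset E gamma I v = [set v].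
  apply/setP => u; rewrite !inE; apply/idP/eqP => [|->]; last first.
    by rewrite vNI vBE /reachI connect0.
  case/andP=> /andP[/connectP[[|z q] //= /andP[/andP[_ Evz] _] _] _] _.
  by have := v_leaf z; rewrite Evz.
rewrite expect_set1 /S_T; case: #|V| (ndesc_max E v) => // n _ /=.
by rewrite (negPf vNI) vBE !inE eqxx mulr1 mulr0 addr0.
Qed.

Lemma prod_nat_bool (P : pred V) (b : V -> bool) :
  \prod_(i | P i) ((b i)%:R : R) = ([forall i, P i ==> b i])%:R.
Proof.
case: (boolP [forall i, P i ==> b i]) => [/forallP Pb | /forallPn[i]].
  by apply: big1 => i Pi; rewrite (implyP (Pb i) Pi).
by rewrite negb_imply => /andP[Pi /negPf bi]; rewrite (bigD1 i) //= bi mul0r.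
Qed.

Lemma unrel_gate J v C : v \notin J -> gamma v != BE -> (forall w, E v w -> w \in J) ->
  unrel E gamma p J v C = evalA (init_poly E gamma p v) C.
Proof.
move=> vNJ v_gate chJ.
pose gate_value := match gamma v with
  | OR => [exists w, E v w && (w \in C)]
  | AND => [forall w, E v w ==> (w \in C)]
  | BE => false end.
have S_gate f : S_T E gamma J C f v = gate_value.
  rewrite /S_T; case: #|V| (ndesc_max E v) => // n vn /=; rewrite (negPf vNJ).
  have ch_C w : E v w -> Sfun E gamma J C f n w = (w \in C).
    by move=> Evw; case: n vn (ndesc_child Evw vn) => // n _ _ /=; rewrite chJ.
  rewrite /gate_value; case: (gamma v) v_gate => // _;
    [apply: eq_existsb | apply: eq_forallb] => w;
    by case Evw: (E v w) => //=; rewrite ch_C.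
rewrite unrel_expect (@eq_expect _ _ p _ _ (fun _ => gate_value%:R)) => [|f]; last first.
  by rewrite S_gate.
rewrite expect_cst /init_poly /gate_value; case: (gamma v) v_gate => // _.
  have subr_nat1 (b : bool) : 1 - b%:R = (~~ b)%:R :> R by case: b; rewrite ?subrr ?subr0.
  rewrite evalA_sub evalA_one evalA_prod.
  under eq_bigr do rewrite evalA_sub evalA_one evalA_mono sub1set subr_nat1.
  have -> : [exists w, E v w && (w \in C)] = [exists w, ~~ (E v w ==> (w \notin C))].
    by apply: eq_existsb => w; rewrite negb_imply negbK.
  by rewrite (@prod_nat_bool _ (fun w => w \notin C)) subr_nat1 negb_forall.
by rewrite evalA_prod; under eq_bigr do rewrite evalA_mono sub1set; rewrite prod_nat_bool.
Qed.

Lemma init_poly_support u : inA [set w | E u w] (init_poly E gamma p u).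
Proof.
have mono_child w : E u w -> inA [set w | E u w] (mono R [set w]).
  move=> Euw; have sub_w : [set w] \subset [set w | E u w] by rewrite sub1set inE.
  by apply: (inAS sub_w); exact: inA_mono.
rewrite /init_poly; case: (gamma u); last exact: inA_const.
  apply: inA_sub; first exact: inA_const.
  by apply: inA_prod => w /mono_child; apply: inA_sub; apply: inA_const.
exact: inA_prod.
Qed.

Lemma CBEsetD1 J v w : CBEset E J v :\ w \subset CBEset E (J :\ w) v.
Proof.
apply/subsetP => x; rewrite !inE => /andP[nxw /andP[vx xJ]].
by rewrite nxw xJ (reachIS (subsetDl J [set w])).
Qed.

Lemma CBEsetD1U J K v w : w \in CBEset E J v ->
  (forall x, reachI E K w x -> (x \in J :\ w) = (x \in K)) ->
  (CBEset E J v :\ w) :|: CBEset E K w \subset CBEset E (J :\ w) v.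
Proof.
move=> wCBE JK; rewrite subUset CBEsetD1; apply/subsetP => x; rewrite !inE => /andP[wx xK].
have := JK x wx; rewrite !inE xK => ->; rewrite andbT.
move: wCBE; rewrite inE => /andP[vw _].
apply: connect_trans (reachIS (subsetDl J [set w]) vw) _.
apply: connect_restrict wx => a b wa /andP[aNK Eab].
by rewrite /= Eab andbT JK.
Qed.

Definition represents J u a :=
  inA (CBEset E J u) a /\ forall C, evalA a C = unrel E gamma p J u C.

Lemma represents_BE J u : gamma u = BE -> u \notin J -> (forall w, ~~ E u w) ->
  represents J u (constA V (p u)).
Proof.
move=> uBE uNJ u_leaf; split=> [|C]; first exact: inA_const.
by rewrite evalA_const unrel_BE.
Qed.

Lemma represents_gate J u : u \notin J -> gamma u != BE -> (forall w, E u w -> w \in J) ->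
  represents J u (init_poly E gamma p u).
Proof.
move=> uNJ u_gate chJ; split=> [|C]; last by rewrite unrel_gate.
have sub_ch : [set w | E u w] \subset CBEset E J u.
  by apply/subsetP => w; rewrite !inE => Euw; rewrite chJ // reachI_step.
by apply: (inAS sub_ch); exact: init_poly_support.
Qed.

Lemma represents_substA J K u w a b : w \in J ->
  (forall x, reachI E K w x -> (x \in J :\ w) = (x \in K)) ->
  [disjoint BEset E gamma J u & BEset E gamma K w] ->
  represents J u a -> represents K w b -> represents (J :\ w) u (substA a w b).
Proof.
move=> wJ JK dis_JK [aJ a_unrel] [bK b_unrel]; split=> [|C].
  have [wCBE | wNCBE] := boolP (w \in CBEset E J u).
    by apply: (inAS (CBEsetD1U wCBE JK)); apply: inA_substA.
  by apply: (inAS (CBEsetD1 J u w)); apply: inA_substA_notin.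
rewrite evalA_substA b_unrel !a_unrel (unrel_pivot C wJ JK dis_JK).
by ring.
Qed.

Lemma BEset_Iset_disjoint J u w : w \in J -> prec E w u ->
  [disjoint BEset E gamma J u & BEset E gamma (Iset E r w) w].
Proof.
move=> wJ wu; rewrite -setI_eq0; apply/eqP/setP => b; rewrite in_set0 in_setI !in_BEset.
apply/negP => /andP[/and3P[ub bNJ _] /and3P[wb bNI _]].
have [bw | w_dom] := reachI_Iset_dominated acyclicE rootedE wb bNI.
  by rewrite bw wJ in bNJ.
by rewrite (negPf (dominated_reachI_notin acyclicE rootedE wu w_dom ub)) in wJ.
Qed.

End FaultTree.

Lemma eq_in_foldl (A : Type) (T : eqType) (f1 f2 : A -> T -> A) z (l : seq T) :
  {in l, forall x acc, f1 acc x = f2 acc x} -> foldl f1 z l = foldl f2 z l.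
Proof.
elim: l z => //= x l IHl z f12; rewrite f12 ?mem_head // IHl // => y yl.
by apply: f12; rewrite in_cons yl orbT.
Qed.

Section Algorithm.
Variables (R : realType) (V : finType) (E : rel V) (r : V) (gamma : V -> gate) (p : V -> R).
Hypothesis acyclicE : forall x y, E x y -> ~~ connect E y x.
Hypothesis rootedE : forall u, connect E r u.
Hypothesis leafE : forall u, (gamma u == BE) = [forall w, ~~ E u w].
Variables (ord : seq V) (s : V -> seq V).
Hypothesis ord_valid : valid_outer E ord.
Hypothesis s_valid : forall v, valid_inner E r v (s v).

Local Notation G := (SFPA_run E gamma p ord s).
Local Notation substG := (fun acc w => substA acc w (G w)).

Lemma SFPA_step_notin (g : V -> sfpoly R V) l x :
  x \notin l -> foldl (SFPA_step E gamma p s) g l x = g x.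
Proof.
elim: l g => //= y l IHl g; rewrite in_cons negb_or => /andP[nxy xNl].
by rewrite IHl // /SFPA_step (negPf nxy).
Qed.

(* The outer loop reaches u only after every w with id(w) = u has been
   finalised, and never revisits w afterwards. *)
Lemma SFPA_run_fix u : G u =
  if gamma u == BE then constA V (p u) else foldl substG (init_poly E gamma p u) (s u).
Proof.
have [ord_uniq [ord_all ord_min]] := ord_valid.
have [a [b ord_eq]] : exists a b, ord = a ++ u :: b.
  by case/splitPr: (ord_all u) => a b; exists a, b.
have [uNa uNb] : u \notin a /\ u \notin b.
  by move: ord_uniq; rewrite ord_eq cat_uniq /= negb_or => /and4P[_ /andP[]].
have G_before x : x \notin u :: b ->
    G x = foldl (SFPA_step E gamma p s) (fun=> 0) a x.
  by move=> xNub; rewrite /SFPA_run ord_eq foldl_cat SFPA_step_notin.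
rewrite {1}/SFPA_run {1}ord_eq foldl_cat /= SFPA_step_notin // /SFPA_step /= eqxx.
case: ifP => // _; apply: eq_in_foldl => w wsu acc; rewrite G_before // in_cons negb_or.
have [_ [s_idom _]] := s_valid u; have [_ [[wu _] _]] := (s_idom w).1 wsu.
apply/andP; split; first by apply: contraTneq wu => ->; rewrite precxx.
by apply/negP => /(ord_min a b u ord_eq); rewrite wu.
Qed.

Lemma inner_loop_prec u a w l : s u = a ++ w :: l -> prec E w u.
Proof.
move=> sual; have [_ [s_idom _]] := s_valid u.
have w_su : w \in s u by rewrite sual mem_cat mem_head orbT.
by have [_ [[]]] := (s_idom w).1 w_su.
Qed.

Lemma inner_loop_setD1 u a w l : s u = a ++ w :: l ->
  (Iset E r u :|: [set x in w :: l]) :\ w = Iset E r u :|: [set x in l].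
Proof.
move=> sual; have [s_uniq [s_idom _]] := s_valid u.
have wNI : w \notin Iset E r u.
  apply/negP => /in_Iset[d [w_idom [_ ud]]].
  have w_su : w \in s u by rewrite sual mem_cat mem_head orbT.
  by rewrite (idom_uniq acyclicE w_idom ((s_idom w).1 w_su)) precxx in ud.
have wNl : w \notin l by move: s_uniq; rewrite sual cat_uniq /= => /and4P[].
apply/setP => x; rewrite in_setD1 !in_setU; have [-> | nxw] := eqVneq x w.
  by rewrite (negPf wNI) /= inE (negPf wNl).
by rewrite !inE (negPf nxw).
Qed.

Lemma inner_loop_agree u a w l x : s u = a ++ w :: l -> connect E w x ->
  (x \in Iset E r u :|: [set y in l]) = (x \in Iset E r w).
Proof.
move=> sual wx; have [s_uniq [s_idom s_order]] := s_valid u.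
have a_prec y : y \in a -> ~~ prec E y w.
  move=> ya; case/splitPr: ya sual => a1 a2 sual.
  by apply: (s_order a1 (a2 ++ w :: l)); rewrite ?sual -?catA // mem_cat mem_head orbT.
have [s_idom' s_uniq'] :
    (forall y, y \in a ++ w :: l <-> is_idom E r y u) /\ uniq (a ++ w :: l).
  by rewrite -sual.
have child := calI_idom_child acyclicE s_idom' s_uniq' a_prec wx.
rewrite in_setU; apply/idP/idP => [/orP[/in_Iset xIu | ] | /in_Iset/child[xIu | xl]].
- by apply/in_Iset/child; left.
- by rewrite inE => xl; apply/in_Iset/child; right.
- by apply/orP; left; apply/in_Iset.
- by apply/orP; right; rewrite inE.
Qed.

Lemma represents_inner_loop u :
  (forall w, w \in s u -> represents E gamma p (Iset E r w) w (G w)) ->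
  forall a l acc, s u = a ++ l ->
  represents E gamma p (Iset E r u :|: [set x in l]) u acc ->
  represents E gamma p (Iset E r u) u (foldl substG acc l).
Proof.
move=> G_rep a l; elim: l a => [|w l IHl] a acc sual acc_rep /=.
  have nil0 : [set x in [::]] = set0 :> {set V} by apply/setP => x; rewrite !inE.
  by rewrite nil0 setU0 in acc_rep.
apply: (IHl (rcons a w)); first by rewrite sual cat_rcons.
have wJ : w \in Iset E r u :|: [set x in w :: l].
  by apply/setUP; right; rewrite inE mem_head.
have dis_Iw := BEset_Iset_disjoint gamma acyclicE rootedE wJ (inner_loop_prec sual).
have w_su : w \in s u by rewrite sual mem_cat mem_head orbT.
rewrite -(inner_loop_setD1 sual).
apply: (represents_substA acyclicE wJ _ dis_Iw acc_rep (G_rep w w_su)) => x wx.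
by rewrite (inner_loop_setD1 sual) (inner_loop_agree sual (reachI_connect wx)).
Qed.

Lemma SFPA_run_represents u : represents E gamma p (Iset E r u) u (G u).
Proof.
have [n] := ubnP (ndesc E u); elim: n u => // n IHn u; rewrite ltnS => un.
have [_ [s_idom _]] := s_valid u.
rewrite SFPA_run_fix; case: ifPn => [/eqP uBE | u_gate].
  apply: represents_BE => //; first exact: notin_Iset.
  by move=> w; have := leafE u; rewrite uBE eqxx => /esym/forallP.
apply: (represents_inner_loop _ (a := [::])) => // [w w_su | ].
  have [_ [[wu _] _]] := (s_idom w).1 w_su.
  exact/IHn/(leq_trans (ndesc_lt acyclicE wu)).
apply: represents_gate => // [|w Euw].
  rewrite in_setU negb_or notin_Iset inE /=.
  by apply/negP => /s_idom[_ [[uu _] _]]; rewrite precxx in uu.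
rewrite in_setU; case: (child_calI_or_idom acyclicE rootedE Euw) => [/in_Iset -> // | ].
by move=> /s_idom w_su; rewrite inE w_su orbT.
Qed.

End Algorithm.

Theorem theorem28 (R : realType) (V : finType) (E : rel V) (r : V)
    (gamma : V -> gate) (p : V -> R)
    (HT : is_FT E r gamma p)
    (ord : seq V) (s : V -> seq V)
    (Hord : valid_outer E ord)
    (Hs : forall v, valid_inner E r v (s v))
    (v : V) (I : {set V}) (HI : forall w, w \in I <-> calI E r v w) :
  inA (CBEset E I v) (SFPA_run E gamma p ord s v)
  /\ forall C : {set V}, C \subset CBEset E I v ->
       evalA (SFPA_run E gamma p ord s v) C = unrel E gamma p I v C.
Proof.
have [acyclicE [rootedE [leafE _]]] := HT.
have -> : I = Iset E r v.
  by apply/setP => w; apply/idP/idP => [/HI/in_Iset | /in_Iset/HI].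
have [v_support v_unrel] := SFPA_run_represents p acyclicE rootedE leafE Hord Hs v.
by split=> // C _; exact: v_unrel.
Qed.
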